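(* $M^L(5)=8$.
   Context: $\mathbb{F}=\{0,1\}$. The binary $n$-dimensional hypercube $\mathbb{F}^n$ is the graph on $\mathbb{F}^n$ where two words are adjacent iff their Hamming distance is $1$. For a nonempty $C\subseteq\mathbb{F}^n$, $I(\mathbf{x})=N[\mathbf{x}]\cap C$ with $N[\mathbf{x}]$ the words at Hamming distance $\le1$ from $\mathbf{x}$. $C$ is a local identifying code if $I(\mathbf{x})\ne\emptyset$ for all $\mathbf{x}$ and $I(\mathbf{x})\ne I(\mathbf{y})$ for all adjacent $\mathbf{x},\mathbf{y}$. $M^L(n)$ is the minimum cardinality of a local identifying code in $\mathbb{F}^n$. *)

From mathcomp Require Import all_boot.
Set Implicit Arguments. Unset Strict Implicit. Unset Printing Implicit Defensive.

(* Binary words of length n: F^n with F = bool. *)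
Definition word (n : nat) := {ffun 'I_n -> bool}.

Definition hamming n (x y : word n) : nat := #|[set i : 'I_n | x i != y i]|.

Definition adjacent n (x y : word n) : bool := hamming x y == 1.

Definition closed_nbhd n (x : word n) : {set word n} :=
  [set y : word n | hamming x y <= 1].

Definition I_set n (C : {set word n}) (x : word n) : {set word n} :=
  closed_nbhd x :&: C.

Definition local_identifying_code n (C : {set word n}) : Prop :=
  C != set0 /\
  (forall x : word n, I_set C x != set0) /\
  (forall x y : word n, adjacent x y -> I_set C x != I_set C y).

Definition is_ML n (m : nat) : Prop :=
  (exists C : {set word n}, local_identifying_code C /\ #|C| = m) /\
  (forall C : {set word n}, local_identifying_code C -> m <= #|C|).

From mathcomp Require Import all_boot.
Set Implicit Arguments. Unset Strict Implicit. Unset Printing Implicit Defensive.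

(* Upper bound: the eight words of F^2 x {000, 111} form a local identifying
   code of F^5.

   Lower bound: a set C of words is a local identifying code exactly when it
   meets every closed neighbourhood N[x] and, for adjacent x and
   y, the symmetric difference of N[x] and N[y].  Coding the 32 words of F^5
   by their binary expansions turns these requirements into an explicit list
   of subsets of [0, 32), which the codes of C must all meet; an exhaustive
   search, proved complete below, shows by computation that no set of at
   most 7 numbers meets them all. *)

Fixpoint first_unhit (ch : seq nat) (cs : seq (seq nat)) : option (seq nat) :=
  match cs with
  | [::] => None
  | c :: cs' => if has (fun z => z \in ch) c then first_unhit ch cs' else Some c
  end.

(* try_each f l ex holds when f s ex' holds for some s in l outside ex, where
   ex' extends ex by the elements of l tried before s.  Excluding those
   elements keeps the search from visiting the same candidate set twice. *)
Fixpoint try_each (f : nat -> seq nat -> bool) (l ex : seq nat) : bool :=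
  match l with
  | [::] => false
  | s :: l' => if s \in ex then try_each f l' ex
               else f s ex || try_each f l' (s :: ex)
  end.

(* search cs k ch ex: can ch be extended, by at most k numbers outside ex, to
   a set meeting every member of cs?  Any such set must contain an element of
   the first member of cs that ch misses, so the search branches on those.
   Only completeness is proved (search_complete): a result false thus
   certifies that no hitting set within the budget exists. *)
Fixpoint search (cs : seq (seq nat)) (k : nat) (ch ex : seq nat) : bool :=
  match first_unhit ch cs with
  | None => true
  | Some c => if k is k'.+1 then try_each (fun s ex => search cs k' (s :: ch) ex) c ex
              else false
  end.

Lemma first_unhitP ch cs S : first_unhit ch cs = Some S ->
  S \in cs /\ ~~ has (fun z => z \in ch) S.
Proof.
elim: cs => //= S' cs IH.
case: ifP => [_ /IH [Scs unhit] | unhit [<-]]; first by rewrite inE Scs orbT.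
by rewrite inE eqxx unhit.
Qed.

Lemma try_eachP (P : pred nat) (f : nat -> seq nat -> bool) (l ex : seq nat) :
  (forall s ex, s \in l -> P s -> (forall e, e \in ex -> ~~ P e) -> f s ex) ->
  (exists2 z, z \in l & P z) -> (forall e, e \in ex -> ~~ P e) -> try_each f l ex.
Proof.
elim: l ex => [|s l IH] ex f_ok [z zl Pz] exP //=.
have f_ok' s' ex' : s' \in l -> P s' -> (forall e, e \in ex' -> ~~ P e) -> f s' ex'.
  by move=> s'l; apply: f_ok; rewrite inE s'l orbT.
have z_in_l : z != s -> z \in l by move: zl; rewrite inE => /orP [/eqP ->|]; rewrite ?eqxx.
case: ifP => s_ex.
  apply: IH => //; exists z => //; apply: z_in_l.
  by apply: contraTneq Pz => ->; exact: exP.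
case Ps: (P s); first by rewrite f_ok // inE eqxx.
apply/orP; right; apply: IH => //.
  by exists z => //; apply: z_in_l; apply: contraFneq Ps => <-.
by move=> e; rewrite inE => /orP [/eqP ->|/exP]; rewrite ?Ps.
Qed.

Lemma search_complete (P : pred nat) cs k ch ex rest :
  (forall S, S \in cs -> has P S) ->
  (forall z, P z -> (z \in ch) || (z \in rest)) ->
  (forall e, e \in ex -> ~~ P e) ->
  size rest <= k -> search cs k ch ex.
Proof.
move=> P_hits; elim: k ch ex rest => [|k IH] ch ex rest P_cov exP size_rest /=;
  case E: (first_unhit ch cs) => [S|] //; case/first_unhitP: E => Scs unhit;
  have /hasP [z zS Pz] := P_hits _ Scs;
  have z_ch : z \notin ch by apply: contra unhit => zch; apply/hasP; exists z.
  by move: (P_cov _ Pz) size_rest; rewrite (negbTE z_ch) /=; case: (rest).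
apply: (try_eachP (P := P)) => //; last by exists z.
move=> s ex' sS Ps ex'P.
have s_ch : s \notin ch by apply: contra unhit => sch; apply/hasP; exists s.
have s_rest : s \in rest by move: (P_cov _ Ps); rewrite (negbTE s_ch).
apply: (IH _ _ (rem s rest)) => //; last first.
  by rewrite size_rem //; move: size_rest s_rest; case: (rest).
move=> y Py; rewrite inE; case: eqVneq => //= y_s.
by have := P_cov _ Py; rewrite (perm_mem (perm_to_rem s_rest)) inE (negbTE y_s).
Qed.

Lemma search_hitting_set cs k (hs : seq nat) :
  (forall S, S \in cs -> has (fun z => z \in hs) S) -> size hs <= k ->
  search cs k [::] [::].
Proof.
by move=> hs_hits; apply: (search_complete (P := fun z => z \in hs) (rest := hs)).
Qed.

Definition separates n (x y w : word n) : bool :=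
  (hamming x w <= 1) != (hamming y w <= 1).

Lemma I_set_neq0P n (C : {set word n}) x :
  reflect (exists2 w, w \in C & hamming x w <= 1) (I_set C x != set0).
Proof.
apply: (iffP (@set0Pn _ (I_set C x))) => [[w] | [w Cw xw]].
  by rewrite !inE => /andP [xw Cw]; exists w.
by exists w; rewrite !inE xw.
Qed.

Lemma I_set_neqP n (C : {set word n}) x y :
  reflect (exists2 w, w \in C & separates x y w) (I_set C x != I_set C y).
Proof.
apply: (iffP idP) => [neqI | [w Cw sep_w]].
  have [w] : exists w, (w \in I_set C x) != (w \in I_set C y).
    apply/existsP; apply: contraR neqI => /existsPn same.
    by apply/eqP/setP => w; have := same w; rewrite negbK => /eqP.
  by rewrite !inE; case Cw: (w \in C); rewrite ?andbF ?andbT // => sep_w; exists w.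
apply/negP => /eqP /setP /(_ w); rewrite !inE Cw !andbT => same.
by move: sep_w; rewrite /separates same eqxx.
Qed.

Definition word_of n (m : nat) : word n := [ffun i : 'I_n => odd (m %/ 2 ^ i)].

Definition code_dist n (a b : nat) : nat :=
  count (fun i => odd (a %/ 2 ^ i) != odd (b %/ 2 ^ i)) (iota 0 n).

Lemma hamming_word_of n a b : hamming (word_of n a) (word_of n b) = code_dist n a b.
Proof.
rewrite /hamming /code_dist cardsE cardE size_filter -val_enum_ord count_map enumT.
by apply: eq_count => i /=; rewrite unfold_in /word_of !ffunE.
Qed.

Lemma word_of_inj : {in iota 0 32 &, injective (word_of 5)}.
Proof.
have digits_inj : all (fun a => all (fun b =>
    (code_dist 5 a b == 0) ==> (a == b)) (iota 0 32)) (iota 0 32) by vm_compute.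
move=> a b ain bin eq_ab; apply/eqP.
move/allP/(_ a ain)/allP/(_ b bin)/implyP: digits_inj; apply.
rewrite -hamming_word_of eq_ab /hamming cards_eq0; apply/eqP/setP => i.
by rewrite !inE eqxx.
Qed.

(* Every word of F^5 is coded by a number below 32, since word_of 5 is
   injective there and F^5 has exactly 32 elements. *)
Lemma word_of_onto (w : word 5) : exists2 a, a \in iota 0 32 & word_of 5 a = w.
Proof.
have codes_uniq : uniq (map (word_of 5) (iota 0 32)).
  by rewrite map_inj_in_uniq ?iota_uniq //; exact: word_of_inj.
have all_coded : map (word_of 5) (iota 0 32) =i predT.
  apply/subset_cardP; last exact: subset_predT.
  by rewrite (card_uniqP codes_uniq) size_map size_iota card_ffun card_bool card_ord.
by have /mapP [a ain ->] := all_coded w; exists a.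
Qed.

Definition codes_in (C : {set word 5}) : seq nat :=
  [seq a <- iota 0 32 | word_of 5 a \in C].

(* Coding is a bijection, so C has as many codes as elements. *)
Lemma size_codes_in C : size (codes_in C) = #|C|.
Proof.
have codes_uniq : uniq (map (word_of 5) (codes_in C)).
  rewrite map_inj_in_uniq ?filter_uniq ?iota_uniq //.
  by apply: sub_in2 word_of_inj => a; rewrite mem_filter => /andP [].
have coded_C : map (word_of 5) (codes_in C) =i enum C.
  move=> w; rewrite mem_enum; apply/mapP/idP => [[a] | wC].
    by rewrite mem_filter => /andP [? _] ->.
  by have [a ain aw] := word_of_onto w; exists a; rewrite // mem_filter aw wC.
by rewrite cardE -(perm_size (uniq_perm codes_uniq (enum_uniq _) coded_C)) size_map.
Qed.

Definition nbhd_codes (a : nat) : seq nat :=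
  [seq z <- iota 0 32 | code_dist 5 a z <= 1].
Definition separating_codes (a b : nat) : seq nat :=
  [seq z <- iota 0 32 | (code_dist 5 a z <= 1) != (code_dist 5 b z <= 1)].

Definition constraints : seq (seq nat) :=
  [seq nbhd_codes a | a <- iota 0 32] ++
  [seq separating_codes a b | a <- iota 0 32,
                              b <- [seq b <- iota 0 32 | code_dist 5 a b == 1]].

Lemma codes_in_hit C : local_identifying_code C ->
  forall S, S \in constraints -> has (fun z => z \in codes_in C) S.
Proof.
case=> _ [dominating identifying] S; rewrite mem_cat => /orP [].
  case/mapP => a _ ->; have [w Cw aw] := I_set_neq0P _ _ (dominating (word_of 5 a)).
  have [z zin zw] := word_of_onto w; apply/hasP; exists z.
    by rewrite mem_filter zin -hamming_word_of zw aw.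
  by rewrite mem_filter zw Cw.
case/allpairsPdep => a [b [_]]; rewrite mem_filter => /andP [ab _] ->.
have adj_ab : adjacent (word_of 5 a) (word_of 5 b) by rewrite /adjacent hamming_word_of.
have [w Cw sep_w] := I_set_neqP _ _ _ (identifying _ _ adj_ab).
have [z zin zw] := word_of_onto w; apply/hasP; exists z.
  by rewrite mem_filter zin -!hamming_word_of zw andbT.
by rewrite mem_filter zw Cw.
Qed.

Lemma no_small_hitting_set : search constraints 7 [::] [::] = false.
Proof. by vm_compute. Qed.

Lemma code_lower (C : {set word 5}) : local_identifying_code C -> 8 <= #|C|.
Proof.
move=> lic; rewrite leqNgt ltnS -size_codes_in; apply/negP => small.
by move: no_small_hitting_set; rewrite (search_hitting_set (codes_in_hit lic) small).
Qed.

(* The codes of F^2 x {000, 111}: binary digits (a0, a1, c, c, c). *)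
Definition rep_codes : seq nat := [seq a + 28 * c | c <- iota 0 2, a <- iota 0 4].

Definition rep_code : {set word 5} := [set w in map (word_of 5) rep_codes].

(* Its eight codes are distinct and below 32, hence code distinct words. *)
Lemma card_rep_code : #|rep_code| = 8.
Proof.
rewrite cardsE (card_uniqP _) ?size_map // map_inj_in_uniq //.
by apply: sub_in2 word_of_inj; apply/allP.
Qed.

(* Upper bound: the domination and separation requirements, checked on the
   codes of all words and all adjacent pairs, transfer to words by coding. *)
Lemma rep_code_lic : local_identifying_code rep_code.
Proof.
have dominating : all (fun a => has (fun z => code_dist 5 a z <= 1) rep_codes)
  (iota 0 32) by vm_compute.
have identifying : all (fun a => all (fun b => (code_dist 5 a b == 1) ==>
  has (fun z => (code_dist 5 a z <= 1) != (code_dist 5 b z <= 1)) rep_codes)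
  (iota 0 32)) (iota 0 32) by vm_compute.
split; first by apply/set0Pn; exists (word_of 5 0); rewrite inE map_f.
split=> [x | x y].
  have [a ain <-] := word_of_onto x; apply/I_set_neq0P.
  have /hasP [z zrep az] := allP dominating a ain.
  by exists (word_of 5 z); [rewrite inE map_f | rewrite hamming_word_of].
have [a ain <-] := word_of_onto x; have [b bin <-] := word_of_onto y.
rewrite /adjacent hamming_word_of => ab; apply/I_set_neqP.
have /hasP [z zrep sep_z] := implyP (allP (allP identifying a ain) b bin) ab.
by exists (word_of 5 z); [rewrite inE map_f | rewrite /separates !hamming_word_of].
Qed.

Theorem mainTheorem11 : is_ML 5 8.
Proof.
split; last exact: code_lower.
by exists rep_code; split; [exact: rep_code_lic | exact: card_rep_code].
Qed.
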